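(* Let $t \ge 1$ and $b \ge 0$ be integers, $T$ a finite non-empty subset of $\mathbb{Z}^b$, and $f : \mathbb{Z}^b \to \mathbb{Z}$ a function. Then there is a function $g : \mathbb{Z}^b \to \{0,\dots,t-1\}$ such that for each $x \in \mathbb{Z}^b$, $\sum_{y\in T} g(x-y) \equiv f(x) \pmod t$.
   Context: $\mathbb{Z}^0$ is the trivial group. *)

From mathcomp Require Import all_boot all_order all_algebra.
Set Implicit Arguments.
Unset Strict Implicit.
Unset Printing Implicit Defensive.
(* Z^b is represented as row vectors 'rV[int]_b (a zmodType); 'rV[int]_0 is
   the trivial group. *)

(** Choose an additive map [phi : Z^b -> Z] that is injective on [T] (a base-[M]
    expansion with [M] large), and let [ymin], [ymax] be the points of [T] where
    [phi] is extremal, [D := phi ymax - phi ymin].  Put [g := 0] on the band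
    [0 <= phi z < D] and extend [g] outwards.  Above the band, the congruence at
    [x = z + ymin] determines [g z] from values of [g] at points [x - y] with
    [phi z - D <= phi (x - y) < phi z]; below the band, the congruence at
    [x = z + ymax] determines [g z] from points with
    [phi z < phi (x - y) <= phi z + D].  Every [x] has [x - ymin] above the
    band or [x - ymax] below it, so every congruence is enforced. *)

From mathcomp Require Import all_boot all_order all_algebra.
From mathcomp Require Import zify lra.
Set Implicit Arguments.
Unset Strict Implicit.
Unset Printing Implicit Defensive.
Import Order.TTheory GRing.Theory Num.Theory.
Local Open Scope ring_scope.

Section MeasureRecursion.

Variables (A R : Type) (r0 : R) (m : A -> nat) (F : (A -> R) -> A -> R).
Hypothesis F_local : forall k k' z,
  (forall w, (m w < m z)%N -> k w = k' w) -> F k z = F k' z.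

Lemma iter_local_stable n z : (m z < n)%N ->
  iter n F (fun=> r0) z = iter n.+1 F (fun=> r0) z.
Proof.
elim: n z => [//|n IHn] z lt_zn /=.
by apply: F_local => w lt_wz; apply: IHn; apply: leq_trans lt_wz _.
Qed.

Lemma iter_local_eq n z : (m z < n)%N ->
  iter n F (fun=> r0) z = iter (m z).+1 F (fun=> r0) z.
Proof.
elim: n => [//|n IHn]; rewrite ltnS leq_eqVlt => /predU1P [<- //| lt_zn].
by rewrite -iter_local_stable // IHn.
Qed.

Lemma exists_local_fixpoint : exists g : A -> R, forall z, g z = F g z.
Proof.
exists (fun z => iter (m z).+1 F (fun=> r0) z) => z /=.
by apply: F_local => w lt_wz; rewrite iter_local_eq.
Qed.

End MeasureRecursion.

Definition band_dist (D p : int) : nat :=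
  if D <= p then (absz (p - D)).+1 else if p < 0 then absz p else 0%N.

Lemma band_dist_above (D p q : int) :
  D <= p -> p - D <= q < p -> (band_dist D q < band_dist D p)%N.
Proof.
by rewrite /band_dist => le_Dp /andP [? ?]; rewrite le_Dp; do 2?case: ifP; lia.
Qed.

Lemma band_dist_below (D p q : int) :
  p < 0 -> p < q <= p + D -> (band_dist D q < band_dist D p)%N.
Proof.
rewrite /band_dist => lt_p0 /andP [? ?].
have -> : (D <= p) = false by lia.
by rewrite lt_p0; do 2?case: ifP; lia.
Qed.

Section BandSolution.

Variables (V : zmodType) (t : nat) (T : seq V) (f : V -> int).
Variables (phi : V -> int) (ymin ymax : V).
Hypothesis phiB : {morph phi : u v / u - v}.
Hypothesis t_gt0 : (0 < t)%N.
Hypothesis uniqT : uniq T.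
Hypotheses (ymin_in : ymin \in T) (ymax_in : ymax \in T).
Hypothesis ymin_min : forall y, y \in T -> y != ymin -> phi ymin < phi y.
Hypothesis ymax_max : forall y, y \in T -> y != ymax -> phi y < phi ymax.

Let D := phi ymax - phi ymin.

(* The value of [k (x - y0)] forced by the congruence at [x]. *)
Definition residual (k : V -> nat) (y0 x : V) : nat :=
  absz ((f x - \sum_(y <- T | y != y0) (k (x - y))%:Z) %% t)%Z.

Definition band_step (k : V -> nat) (z : V) : nat :=
  if D <= phi z then residual k ymin (z + ymin)
  else if phi z < 0 then residual k ymax (z + ymax) else 0%N.

Lemma residual_lt k y0 x : (residual k y0 x < t)%N.
Proof.
have tz_gt0 : 0 < t%:Z by rewrite ltz_nat.
rewrite /residual; set a := (_ - _).
by have := ltz_pmod a tz_gt0; have := modz_ge0 a (lt0r_neq0 tz_gt0); lia.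
Qed.

Lemma residual_solves k y0 x : y0 \in T -> k (x - y0) = residual k y0 x ->
  (\sum_(y <- T) (k (x - y))%:Z = f x %[mod t])%Z.
Proof.
move=> y0_in k_x; rewrite (bigD1_seq y0 y0_in uniqT) /= k_x /residual.
have -> : forall a : int, (absz (a %% t)%Z)%:Z = (a %% t)%Z.
  by move=> a; apply: gez0_abs; apply: modz_ge0; rewrite eqz_nat -lt0n.
by rewrite modzDml subrK.
Qed.

Lemma residual_local k k' y0 x :
  (forall y, y \in T -> y != y0 -> k (x - y) = k' (x - y)) ->
  residual k y0 x = residual k' y0 x.
Proof.
move=> eq_kk'; rewrite /residual big_seq_cond [in RHS]big_seq_cond.
by under eq_bigr => y /andP [y_in y_ne] do rewrite eq_kk' //.
Qed.

Lemma band_step_local k k' z :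
  (forall w, (band_dist D (phi w) < band_dist D (phi z))%N -> k w = k' w) ->
  band_step k z = band_step k' z.
Proof.
move=> eq_kk'; rewrite /band_step.
have le_max y : y \in T -> phi y <= phi ymax.
  by move=> y_in; case: (eqVneq y ymax) => [-> //| ?]; apply/ltW/ymax_max.
have ge_min y : y \in T -> phi ymin <= phi y.
  by move=> y_in; case: (eqVneq y ymin) => [-> //| ?]; apply/ltW/ymin_min.
have phi_shift y0 y : phi (z + y0 - y) = phi z - (phi y - phi y0).
  by rewrite -!phiB opprB addrA addrAC.
case: ifP => [above | _]; last case: ifP => [below | //].
- apply: residual_local => y y_in y_ne; apply: eq_kk'.
  rewrite phi_shift; apply: band_dist_above => //.
  by have := ymin_min y_in y_ne; have := le_max y y_in; rewrite /D; lia.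
- apply: residual_local => y y_in y_ne; apply: eq_kk'.
  rewrite phi_shift; apply: band_dist_below => //.
  by have := ymax_max y_in y_ne; have := ge_min y y_in; rewrite /D; lia.
Qed.

Lemma exists_band_solution : exists g : V -> nat,
  (forall z, g z < t)%N /\
  forall x, (\sum_(y <- T) (g (x - y))%:Z = f x %[mod t])%Z.
Proof.
have [g g_fix] := exists_local_fixpoint 0%N band_step_local.
exists g; split=> [z | x].
  rewrite g_fix /band_step; case: ifP => _; last case: ifP => _ //;
  exact: residual_lt.
have D_ge0 : 0 <= D.
  rewrite /D subr_ge0; case: (eqVneq ymax ymin) => [-> // | ne].
  exact/ltW/ymin_min.
case: (boolP (D <= phi (x - ymin))) => above.
  apply: (residual_solves ymin_in); rewrite g_fix /band_step above.
  by rewrite subrK.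
have below : phi (x - ymax) < 0 by move: above; rewrite !phiB /D; lia.
have not_above : (D <= phi (x - ymax)) = false by lia.
apply: (residual_solves ymax_in); rewrite g_fix /band_step not_above below.
by rewrite subrK.
Qed.

End BandSolution.

Lemma exists_argmax d (R : orderType d) (X : eqType) (s : seq X) (F : X -> R) :
  s != [::] -> exists2 y, y \in s & forall z, z \in s -> (F z <= F y)%O.
Proof.
elim: s => [//| x s IHs] _.
have [-> | /IHs [y y_in le_y]] := eqVneq s [::].
  by exists x => [|z]; rewrite ?mem_head // mem_seq1 => /eqP ->.
have [le_xy | lt_yx] := leP (F x) (F y).
  by exists y => [|z]; rewrite inE ?y_in ?orbT // => /predU1P [-> | /le_y].
exists x => [|z]; first exact: mem_head.
by rewrite inE => /predU1P [-> // | /le_y /le_trans]; apply; apply: ltW.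
Qed.

Lemma exists_strict_argmax d (R : orderType d) (X : eqType) (s : seq X)
    (F : X -> R) :
  s != [::] -> {in s &, injective F} ->
  exists2 y, y \in s & forall z, z \in s -> z != y -> (F z < F y)%O.
Proof.
move=> s_ne F_inj; have [y y_in le_y] := exists_argmax F s_ne.
exists y => // z z_in; rewrite lt_neqAle le_y // andbT.
by apply: contra => /eqP eq_F; rewrite (F_inj _ _ z_in y_in eq_F).
Qed.

Lemma expansion_eq0 (M : int) n (a : 'I_n -> int) :
  (forall i, `|a i| < M) -> \sum_(i < n) a i * M ^+ i = 0 -> forall i, a i = 0.
Proof.
elim: n a => [| n IHn] a a_lt sum0 i; first by case: i.
have M_gt0 : 0 < M by apply: le_lt_trans (a_lt ord0).
move: sum0; rewrite big_ord_recl expr0 mulr1.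
under eq_bigr do rewrite lift0 exprS mulrCA.
rewrite -mulr_sumr; set S := \sum_(i < n) _.
move=> /eqP; rewrite addr_eq0 => /eqP a0.
have S0 : S = 0.
  apply/eqP; apply: contraT => S_ne0; have := a_lt ord0.
  have : 1 <= `|S| by rewrite -gtz0_ge1 normr_gt0.
  by rewrite a0 normrN normrM gtr0_norm //; nra.
have a_lift : forall j, a (lift ord0 j) = 0 by apply: IHn.
case: (unliftP ord0 i) => [j -> | ->]; first exact: a_lift.
by rewrite a0 S0 mulr0 oppr0.
Qed.

Lemma exists_injective_additive b (T : seq 'rV[int]_b) :
  exists phi : 'rV[int]_b -> int,
    {morph phi : u v / u - v} /\ {in T &, injective phi}.
Proof.
pose S := \sum_(y <- T) \sum_(i < b) `|y 0 i|.
pose M := 1 + 2 * S.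
pose phi (v : 'rV[int]_b) := \sum_(i < b) v 0 i * M ^+ i.
have phiB : {morph phi : u v / u - v}.
  move=> u v; rewrite /phi -sumrB.
  by apply: eq_bigr => i _; rewrite !mxE mulrBl.
have le_S y i : y \in T -> `|y 0 i| <= S.
  move=> y_in; rewrite /S (perm_big _ (perm_to_rem y_in)) big_cons.
  rewrite (bigD1 i) //=.
  by rewrite -addrA lerDl addr_ge0 // !sumr_ge0 // => *; apply: sumr_ge0.
exists phi; split=> // y y' y_in y'_in eq_phi.
apply/eqP; rewrite -subr_eq0; apply/eqP/rowP => i; rewrite [RHS]mxE.
apply: (expansion_eq0 (M := M) (a := fun j => (y - y') 0 j)).
  move=> j; rewrite !mxE; apply: le_lt_trans (ler_normB _ _) _.
  apply: le_lt_trans (lerD (le_S y j y_in) (le_S y' j y'_in)) _.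
  by rewrite /M mulr_natl mulr2n ltrDr.
by rewrite -/(phi (y - y')) phiB eq_phi subrr.
Qed.

Theorem proposition14 (t b : nat) (T : seq 'rV[int]_b) (f : 'rV[int]_b -> int) :
  (1 <= t)%N -> uniq T -> T != [::] ->
  exists g : 'rV[int]_b -> 'I_t,
    forall x : 'rV[int]_b,
      (((\sum_(y <- T) nat_of_ord (g (x - y)%R))%N)%:Z = f x %[mod (t%:Z)])%Z.
Proof.
move=> t_gt0 uniqT T_ne.
have [phi [phiB phi_inj]] := exists_injective_additive T.
have [ymax ymax_in ymax_max] := exists_strict_argmax T_ne phi_inj.
have [ymin ymin_in ymin_min] : exists2 ymin, ymin \in T &
    forall y, y \in T -> y != ymin -> phi ymin < phi y.
  have oppphi_inj : {in T &, injective (fun y => - phi y)}.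
    by move=> u v u_in v_in /oppr_inj; apply: phi_inj.
  have [y y_in lt_y] := exists_strict_argmax T_ne oppphi_inj.
  by exists y => // z z_in z_ne; rewrite -ltrN2 lt_y.
have [g [g_lt g_sol]] :=
  exists_band_solution f phiB t_gt0 uniqT ymin_in ymax_in ymin_min ymax_max.
exists (fun z => Ordinal (g_lt z)) => x /=.
rewrite -[X in (X = _ %[mod _])%Z]intz sumMz.
by under eq_bigr do rewrite intz; apply: g_sol.
Qed.
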